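(* Let $W$ be a group admitting an odd connected Coxeter system $(W,S)$ of rank $n\geq 3$ whose graph $\mathcal V_{(W,S)}$ is a tree, and let $m_1,\dots,m_{n-1}$ be the (multiset of) finite exponents of this system. Then there is an injective homomorphism $$W\hookrightarrow \operatorname{Aut}\big((\mathbb Z/m_1\mathbb Z)\ast(\mathbb Z/m_2\mathbb Z)\ast\cdots\ast(\mathbb Z/m_{n-1}\mathbb Z)\big).$$
   Context: A Coxeter system $(W,S)$ with $S=\{w_1,\dots,w_n\}$ means that $W$ has the presentation $\langle w_1,\dots,w_n \mid (w_iw_j)^{m_{ij}}=1\rangle$, where $m_{ii}=1$ and $m_{ij}=m_{ji}\in\{2,3,4,\dots\}\cup\{\infty\}$ for $i\neq j$ (no relation is imposed when $m_{ij}=\infty$). The numbers $m_{ij}$, $i\neq j$, are the exponents and $n$ is the rank. The system is odd if every exponent is odd or $\infty$. The graph $\mathcal V_{(W,S)}$ has vertex set $\{1,\dots,n\}$ and an edge between $i\neq j$ iff $m_{ij}<\infty$; the system is connected if $\mathcal V_{(W,S)}$ is connected. When $\mathcal V_{(W,S)}$ is a tree there are exactly $n-1$ finite exponents (one per edge). $\ast$ denotes free product. *)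

From mathcomp Require Import all_boot.
Set Implicit Arguments. Unset Strict Implicit. Unset Printing Implicit Defensive.

Record Grp := MkGrp {
  gcar :> Type;
  gmul : gcar -> gcar -> gcar;
  gone : gcar;
  ginv : gcar -> gcar;
  gmulA : forall a b c, gmul a (gmul b c) = gmul (gmul a b) c;
  gmul1l : forall a, gmul gone a = a;
  gmulVl : forall a, gmul (ginv a) a = gone
}.

Definition gpow (G : Grp) (x : G) (k : nat) : G := iter k (gmul x) (gone G).

Definition is_hom (G H : Grp) (f : G -> H) : Prop :=
  forall a b, f (gmul a b) = gmul (f a) (f b).

(* (G, g) is a presentation <g_i | Rel>: g satisfies Rel, and every family
   in any group satisfying Rel extends uniquely to a homomorphism. *)
Definition is_presentation (k : nat) (G : Grp) (g : 'I_k -> G)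
  (Rel : forall H : Grp, ('I_k -> H) -> Prop) : Prop :=
  Rel G g /\
  forall (H : Grp) (h : 'I_k -> H), Rel H h ->
    (exists f : G -> H, is_hom f /\ forall i, f (g i) = h i) /\
    (forall f1 f2 : G -> H, is_hom f1 -> is_hom f2 ->
       (forall i, f1 (g i) = h i) -> (forall i, f2 (g i) = h i) ->
       forall x, f1 x = f2 x).

(* Coxeter matrices: M i j = Some m for a finite exponent m, None for infinity. *)
Definition coxeter_matrix (n : nat) (M : 'I_n -> 'I_n -> option nat) : Prop :=
  (forall i, M i i = Some 1) /\
  (forall i j, M i j = M j i) /\
  (forall i j m, i != j -> M i j = Some m -> 2 <= m).

Definition coxeter_rel (n : nat) (M : 'I_n -> 'I_n -> option nat)
  (H : Grp) (h : 'I_n -> H) : Prop :=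
  forall i j m, M i j = Some m -> gpow (gmul (h i) (h j)) m = gone H.

Definition coxeter_system (n : nat) (M : 'I_n -> 'I_n -> option nat)
  (W : Grp) (s : 'I_n -> W) : Prop :=
  coxeter_matrix M /\ is_presentation s (coxeter_rel M).

Definition odd_coxeter (n : nat) (M : 'I_n -> 'I_n -> option nat) : Prop :=
  forall i j m, i != j -> M i j = Some m -> odd m.

(* The graph V_(W,S): edge between i != j iff m_ij < infinity. *)
Definition cox_adj (n : nat) (M : 'I_n -> 'I_n -> option nat) : rel 'I_n :=
  fun i j => (i != j) && isSome (M i j).

Definition cox_edges (n : nat) (M : 'I_n -> 'I_n -> option nat) :
  {set 'I_n * 'I_n} :=
  [set p : 'I_n * 'I_n | (p.1 < p.2)%N && isSome (M p.1 p.2)].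

Definition cox_connected (n : nat) (M : 'I_n -> 'I_n -> option nat) : Prop :=
  forall i j, connect (cox_adj M) i j.

(* A finite graph on n vertices is a tree iff connected with n-1 edges. *)
Definition cox_tree (n : nat) (M : 'I_n -> 'I_n -> option nat) : Prop :=
  cox_connected M /\ #|cox_edges M| = n.-1.

(* Relations of the free product Z/m_1 * ... * Z/m_k. *)
Definition cyclic_free_rel (k : nat) (m : 'I_k -> nat)
  (H : Grp) (h : 'I_k -> H) : Prop :=
  forall i, gpow (h i) (m i) = gone H.

Definition injective_hom_to_Aut (W F : Grp) (phi : W -> F -> F) : Prop :=
  (forall w, is_hom (phi w) /\ bijective (phi w)) /\
  (forall w1 w2 x, phi (gmul w1 w2) x = phi w1 (phi w2 x)) /\
  (forall w1 w2, (forall x, phi w1 x = phi w2 x) -> w1 = w2).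

From mathcomp Require Import all_boot ssralg zmodp ring.
From Stdlib Require Import ProofIrrelevance FunctionalExtensionality Lia.
From mathcomp Require Import zify.
Set Implicit Arguments. Unset Strict Implicit. Unset Printing Implicit Defensive.

(* Write x_k for the generators of F and e_k = (u_k, v_k) for the edges of the
   tree.  Because the graph is a tree, the x_k are the increments of a
   potential: there is zeta : S -> F with zeta r = 1 at a root r and
   zeta(u_k)^-1 zeta(v_k) = x_k.  By the universal properties we get
   - psi : F -> W with psi x_k = s_(u_k) s_(v_k), so psi (zeta v) = s_r s_v;
   - an involutive automorphism sigma of F with sigma x_k = zeta(u_k) zeta(v_k)^-1,
     which satisfies sigma (zeta v) = zeta(v)^-1;
   - phi : W -> Aut F with phi s_v = (conjugation by zeta(v)^-1) o sigma.
   Then phi (psi f) is conjugation by f, phi s_r = sigma, and every element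
   of W is psi f or psi f * s_r.  So a kernel element of phi is either psi f
   with f central in F, hence f = 1 since F is centerless (proved with
   normal forms of reduced words), or psi f * s_r with sigma inner, which is
   impossible because sigma acts as -1 on the quotient Z/m_k of F and m_k is
   odd. *)

Local Notation "a ** b" := (gmul a b) (at level 40, left associativity).
Local Notation "x ^-1" := (ginv x).

Section GroupFacts.
Variable G : Grp.
Implicit Types a b c x y : G.

Lemma gmulKl a b : a ^-1 ** (a ** b) = b.
Proof. by rewrite gmulA gmulVl gmul1l. Qed.

Lemma gmulVr a : a ** a ^-1 = gone G.
Proof.
have h : (a^-1)^-1 ** a^-1 ** (a ** a^-1) = a ** a^-1.
  by rewrite gmulVl gmul1l.
by rewrite -h -gmulA (gmulKl a) gmulVl.
Qed.

Lemma gmul1r a : a ** gone G = a.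
Proof. by rewrite -(gmulVl a) gmulA gmulVr gmul1l. Qed.

Lemma gmulVKl a b : a ** (a ^-1 ** b) = b.
Proof. by rewrite gmulA gmulVr gmul1l. Qed.

Lemma gmulKr a b : (b ** a) ** a ^-1 = b.
Proof. by rewrite -gmulA gmulVr gmul1r. Qed.

Lemma gmulVKr a b : (b ** a ^-1) ** a = b.
Proof. by rewrite -gmulA gmulVl gmul1r. Qed.

Lemma gmulIl a b c : a ** b = a ** c -> b = c.
Proof. by move=> h; rewrite -(gmulKl a b) h gmulKl. Qed.

Lemma ginv_uniq a b : a ** b = gone G -> b = a ^-1.
Proof. by move=> h; apply: (gmulIl (a:=a)); rewrite h gmulVr. Qed.

Lemma ginvK a : (a ^-1) ^-1 = a.
Proof. by symmetry; apply: ginv_uniq; rewrite gmulVl. Qed.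

Lemma ginvM a b : (a ** b) ^-1 = b ^-1 ** a ^-1.
Proof.
symmetry; apply: ginv_uniq.
by rewrite -gmulA (gmulA b) gmulVr gmul1l gmulVr.
Qed.

Lemma ginv1 : (gone G) ^-1 = gone G.
Proof. by symmetry; apply: ginv_uniq; rewrite gmul1l. Qed.

Lemma gpowS x j : gpow x j.+1 = x ** gpow x j.
Proof. by []. Qed.

Lemma gpow1 x : gpow x 1 = x.
Proof. by rewrite gpowS gmul1r. Qed.

Lemma gpowD x i j : gpow x (i + j) = gpow x i ** gpow x j.
Proof.
elim: i => [|i IH]; first by rewrite add0n gmul1l.
by rewrite addSn !gpowS IH gmulA.
Qed.

Lemma gpowSr x j : gpow x j.+1 = gpow x j ** x.
Proof. by rewrite -addn1 gpowD gpow1. Qed.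

Lemma gpowM x i j : gpow x (i * j) = gpow (gpow x i) j.
Proof.
elim: j => [|j IH]; first by rewrite muln0.
by rewrite mulnS gpowD IH gpowS.
Qed.

Lemma gpow1n j : gpow (gone G) j = gone G.
Proof. by elim: j => // j IH; rewrite gpowS IH gmul1l. Qed.

Lemma gpow_mod x m j : gpow x m = gone G -> gpow x (j %% m) = gpow x j.
Proof.
by move=> xm; rewrite {2}(divn_eq j m) gpowD mulnC gpowM xm gpow1n gmul1l.
Qed.

Lemma gpow_conj c x j : gpow (c ** x ** c ^-1) j = c ** gpow x j ** c ^-1.
Proof.
elim: j => [|j IH]; first by rewrite gmul1r gmulVr.
by rewrite gpowS IH !gmulA gmulVKr.
Qed.

Lemma gpow_inv x j : gpow (x ^-1) j = (gpow x j) ^-1.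
Proof.
elim: j => [|j IH]; first by rewrite ginv1.
by rewrite gpowS IH gpowSr ginvM.
Qed.

End GroupFacts.

Section HomFacts.
Variables (G H : Grp) (f : G -> H).
Hypothesis hf : is_hom f.

Lemma hom1 : f (gone G) = gone H.
Proof. by apply: (gmulIl (a := f (gone G))); rewrite -hf gmul1l gmul1r. Qed.

Lemma homV a : f (a ^-1) = (f a) ^-1.
Proof. by apply: ginv_uniq; rewrite -hf gmulVr hom1. Qed.

Lemma homX a j : f (gpow a j) = gpow (f a) j.
Proof. by elim: j => [|j IH]; [exact: hom1 | rewrite !gpowS hf IH]. Qed.

Lemma hom_inj_of_ker : (forall a, f a = gone H -> a = gone G) -> injective f.
Proof.
move=> ker1 a b fab; apply: (gmulIl (a := b ^-1)); rewrite gmulVl; apply: ker1.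
by rewrite hf homV fab gmulVl.
Qed.

End HomFacts.

Lemma hom_comp (G H K : Grp) (f : G -> H) (g : H -> K) :
  is_hom f -> is_hom g -> is_hom (g \o f).
Proof. by move=> hf hg a b /=; rewrite hf hg. Qed.

(* A relation predicate is stable if it is transported by
   homomorphisms and reflected if it can be pulled back along injective ones;
   for such relations the generators of a presented group determine
   homomorphisms and generate the group. *)
Section Presentations.
Variables (k : nat) (Rel : forall H : Grp, ('I_k -> H) -> Prop).

Definition rel_stable := forall (H K : Grp) (f : H -> K) (h : 'I_k -> H),
  is_hom f -> Rel h -> Rel (f \o h).
Definition rel_reflect := forall (H K : Grp) (f : H -> K) (h : 'I_k -> H),
  is_hom f -> injective f -> Rel (f \o h) -> Rel h.

Variables (G : Grp) (g : 'I_k -> G).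
Hypothesis pres : is_presentation g Rel.
Hypothesis stab : rel_stable.

Lemma pres_uniq (H : Grp) (f1 f2 : G -> H) : is_hom f1 -> is_hom f2 ->
  (forall i, f1 (g i) = f2 (g i)) -> forall a, f1 a = f2 a.
Proof.
move=> h1 h2 e.
have R : Rel (f1 \o g) by apply: stab => //; exact: pres.1.
by apply: ((pres.2 H _ R).2 f1 f2 h1 h2) => // i; rewrite /= e.
Qed.

Section Subgroup.
Variable P : G -> Prop.
Hypotheses (P1 : P (gone G)) (PM : forall a b, P a -> P b -> P (a ** b))
  (PV : forall a, P a -> P (a^-1)).

Definition sub_mul (a b : {a | P a}) : {a | P a} :=
  exist _ _ (PM (proj2_sig a) (proj2_sig b)).
Definition sub_inv (a : {a | P a}) : {a | P a} := exist _ _ (PV (proj2_sig a)).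

Lemma sub_ext (a b : {a | P a}) : proj1_sig a = proj1_sig b -> a = b.
Proof.
case: a b => a pa [b pb] /= e; subst b; congr exist; exact: proof_irrelevance.
Qed.

Definition SubGrp : Grp.
refine (@MkGrp {a | P a} sub_mul (exist _ _ P1) sub_inv _ _ _).
- by move=> a b c; apply: sub_ext; rewrite /= gmulA.
- by move=> a; apply: sub_ext; rewrite /= gmul1l.
- by move=> a; apply: sub_ext; rewrite /= gmulVl.
Defined.
End Subgroup.

Hypothesis refl : rel_reflect.

(* The subgroup it defines satisfies
   the relations, so the universal property yields a retraction onto it. *)
Lemma pres_ind (P : G -> Prop) : P (gone G) ->
  (forall a b, P a -> P b -> P (a ** b)) -> (forall a, P a -> P (a^-1)) ->
  (forall i, P (g i)) -> forall a, P a.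
Proof.
move=> P1 PM PV Pg.
pose S := SubGrp P1 PM PV.
pose h : 'I_k -> S := fun i => exist _ (g i) (Pg i).
have val_hom : is_hom (fun a : S => proj1_sig a) by [].
have R : Rel h.
  apply: (refl val_hom); first by move=> a b; exact: sub_ext.
  exact: pres.1.
have [f [hf fg]] := (pres.2 S h R).1.
move=> a; have e := pres_uniq (f2 := id) (hom_comp hf val_hom) (fun _ _ => erefl).
by rewrite -(e (fun i => congr1 _ (fg i)) a); exact: proj2_sig.
Qed.
End Presentations.

Lemma cox_stable n (M : 'I_n -> 'I_n -> option nat) : rel_stable (coxeter_rel M).
Proof. by move=> H K f h hf R i j m e /=; rewrite -hf -homX // R // hom1. Qed.

Lemma cox_reflect n (M : 'I_n -> 'I_n -> option nat) : rel_reflect (coxeter_rel M).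
Proof.
move=> H K f h hf fi R i j m e; apply: fi; rewrite homX // hf hom1 //.
exact: R e.
Qed.

Lemma cyc_stable k (m : 'I_k -> nat) : rel_stable (cyclic_free_rel m).
Proof. by move=> H K f h hf R i /=; rewrite -homX // R hom1. Qed.

Lemma cyc_reflect k (m : 'I_k -> nat) : rel_reflect (cyclic_free_rel m).
Proof. by move=> H K f h hf fi R i; apply: fi; rewrite homX // hom1 //; exact: R i. Qed.

Notation bij_fun p := (proj1_sig p).1.

Section BijectionGroup.
Variables (X : Type) (Q : (X -> X) -> Prop).
Hypotheses (Qid : Q id) (Qcomp : forall f g, Q f -> Q g -> Q (f \o g))
  (Qinv : forall f g, cancel f g -> cancel g f -> Q f -> Q g).

Definition bijT :=
  {p : (X -> X) * (X -> X) | [/\ cancel p.1 p.2, cancel p.2 p.1 & Q p.1]}.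


Lemma bij_ext (p q : bijT) : (forall x, bij_fun p x = bij_fun q x) -> p = q.
Proof.
case: p q => [[f f'] []] /= c1 c2 qf [[g g'] []] /= d1 d2 qg e.
have ef : f = g by apply: functional_extensionality.
subst g; have ef' : f' = g'.
  by apply: functional_extensionality => x; rewrite -{1}(d2 x) c1.
subst g'; congr exist; exact: proof_irrelevance.
Qed.

Definition bij_mul (p q : bijT) : bijT.
refine (exist _ (bij_fun p \o bij_fun q, (proj1_sig q).2 \o (proj1_sig p).2) _).
case: p q => [[f f'] []] /= c1 c2 qf [[g g'] []] /= d1 d2 qg.
split.
- by move=> x /=; rewrite c1 d1.
- by move=> x /=; rewrite d2 c2.
- exact: Qcomp.
Defined.

Definition bij_one : bijT.
by refine (exist _ (id, id) _); split.
Defined.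

Definition bij_inv (p : bijT) : bijT.
refine (exist _ ((proj1_sig p).2, (proj1_sig p).1) _).
by case: p => [[f f'] []] /= c1 c2 qf; split => //; exact: (Qinv c1 c2).
Defined.

Definition BijGrp : Grp.
refine (@MkGrp bijT bij_mul bij_one bij_inv _ _ _).
- by move=> a b c; apply: bij_ext.
- by move=> a; apply: bij_ext.
- by move=> [[f f'] []] c1 c2 qf; apply: bij_ext => x; exact: c1.
Defined.

Lemma bij_fun_gpow (p : BijGrp) j x : bij_fun (gpow p j) x = iter j (bij_fun p) x.
Proof. by elim: j => //= j IH; rewrite -IH. Qed.

End BijectionGroup.

Definition SymGrp (X : Type) : Grp :=
  @BijGrp X (fun _ => True) I (fun _ _ _ _ => I) (fun _ _ _ _ _ => I).

Section Automorphisms.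
Variable F : Grp.

Lemma hom_inv (f g : F -> F) : cancel f g -> cancel g f -> is_hom f -> is_hom g.
Proof. by move=> c1 c2 hf a b; apply: (can_inj c1); rewrite hf !c2. Qed.

Definition AutGrp : Grp :=
  @BijGrp F (@is_hom F F) (fun _ _ => erefl) (fun f g hf hg => hom_comp hg hf) hom_inv.

Definition conjA (c : F) : AutGrp.
refine (exist _ ((fun y => c ** y ** c^-1), (fun y => c^-1 ** y ** c)) _).
split => /=.
- by move=> y; rewrite !gmulA gmulVl gmul1l gmulVKr.
- by move=> y; rewrite !gmulA gmulVr gmul1l gmulKr.
- by move=> a b; rewrite !gmulA gmulVKr.
Defined.

Lemma conjA_hom : is_hom conjA.
Proof.
by move=> a b; apply: bij_ext => y /=; rewrite ginvM !gmulA.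
Qed.

End Automorphisms.

Lemma ord_avoid (k : nat) (l : 'I_k) : 1 < k -> exists j : 'I_k, l != j.
Proof.
move=> k_gt1; have k_gt0 := ltnW k_gt1.
case: (eqVneq l (Ordinal k_gt0)) => [->|l_ne0]; last by exists (Ordinal k_gt0).
by exists (Ordinal k_gt1); apply/eqP => /(congr1 val).
Qed.

(* Normal forms in the free product F of the cyclic groups Z/m_i, m_i > 1.
   A syllable (i, a) stands for x_i ^ a; a word is reduced when its exponents
   lie strictly between 0 and m_i and consecutive syllables involve distinct
   generators.  Left multiplication by x_i acts on reduced words, so by the
   universal property F acts on them, and evaluating the image of the empty
   word recovers the element.  Hence elements are determined by their normal
   forms, which shows that F has trivial center when k > 1. *)
Section FreeProductCyclic.
Variables (k : nat) (m : 'I_k -> nat).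
Hypothesis m_gt1 : forall i, 1 < m i.

Definition syllable := ('I_k * nat)%type.

Definition head_not (i : 'I_k) (t : seq syllable) :=
  if t is (j, _) :: _ then j != i else true.

Fixpoint reduced (w : seq syllable) : bool :=
  if w is (i, a) :: t then [&& 0 < a, a < m i, reduced t & head_not i t]
  else true.

Definition split_head (i : 'I_k) (w : seq syllable) : nat * seq syllable :=
  if w is (j, a) :: t then (if j == i then (a, t) else (0, w)) else (0, w).
Definition join_head (i : 'I_k) (a : nat) (t : seq syllable) : seq syllable :=
  if a == 0 then t else (i, a) :: t.

Definition mul_gen (i : 'I_k) (w : seq syllable) : seq syllable :=
  join_head i ((split_head i w).1.+1 %% m i) (split_head i w).2.

Lemma split_headP i w : reduced w ->
  [/\ (split_head i w).1 < m i, reduced (split_head i w).2,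
      head_not i (split_head i w).2
    & join_head i (split_head i w).1 (split_head i w).2 = w].
Proof.
case: w => [|[j a] t] /=; first by split => //; have := m_gt1 i; case: (m i).
case/and4P => a_gt0 a_lt t_red t_head; case: eqP => [<-|/eqP ji] /=.
  by split => //; rewrite /join_head (negPf (lt0n_neq0 a_gt0)).
by split => //=; [have := m_gt1 i; case: (m i) | rewrite a_gt0 a_lt t_red t_head].
Qed.

Lemma reduced_join i a t :
  a < m i -> reduced t -> head_not i t -> reduced (join_head i a t).
Proof.
rewrite /join_head; case: eqP => //= /eqP a_ne0 a_lt t_red t_head.
by rewrite lt0n a_ne0 a_lt t_red t_head.
Qed.

Lemma split_join i a t : head_not i t -> split_head i (join_head i a t) = (a, t).
Proof.
rewrite /join_head; case: eqP => [->|_] /=; last by rewrite eqxx.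
by case: t => [|[j b] t] //= /negPf ->.
Qed.

Lemma reduced_mul_gen i w : reduced w -> reduced (mul_gen i w).
Proof.
move=> /(split_headP i) [_ t_red t_head _]; apply: reduced_join => //.
by rewrite ltn_mod; have := m_gt1 i; case: (m i).
Qed.

Lemma iter_mul_gen i w j : reduced w ->
  iter j (mul_gen i) w =
  join_head i (((split_head i w).1 + j) %% m i) (split_head i w).2.
Proof.
move=> w_red; have [a_lt t_red t_head w_eq] := split_headP i w_red.
elim: j => [|j IH]; first by rewrite addn0 modn_small.
rewrite iterS IH /mul_gen split_join //=; congr join_head.
by rewrite -addn1 modnDml addn1 addnS.
Qed.

Definition RedWord := {w | reduced w}.

Definition mul_genR i (w : RedWord) : RedWord :=
  exist _ (mul_gen i (proj1_sig w)) (reduced_mul_gen i (proj2_sig w)).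

Lemma val_iter_mul_genR i j (w : RedWord) :
  proj1_sig (iter j (mul_genR i) w) = iter j (mul_gen i) (proj1_sig w).
Proof. by elim: j => //= j ->. Qed.

Lemma mul_genR_order i (w : RedWord) : iter (m i) (mul_genR i) w = w.
Proof.
apply: val_inj; rewrite /= val_iter_mul_genR iter_mul_gen ?(proj2_sig w) //.
have [a_lt _ _ w_eq] := split_headP i (proj2_sig w).
by rewrite modnDr modn_small.
Qed.

Definition gen_perm (i : 'I_k) : SymGrp RedWord.
refine (exist _ (mul_genR i, iter (m i).-1 (mul_genR i)) _); split => // w /=.
- by rewrite -iterSr prednK ?mul_genR_order // ltnW.
- by rewrite -iterS prednK ?mul_genR_order // ltnW.
Defined.

Lemma gen_perm_rel : cyclic_free_rel m gen_perm.
Proof.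
by move=> i; apply: bij_ext => w; rewrite bij_fun_gpow; exact: mul_genR_order.
Qed.

Lemma reduced_rcons w j : reduced w ->
  (if w is [::] then true else (last (j, 0) w).1 != j) -> reduced (rcons w (j, 1)).
Proof.
elim: w => [|[i a] t IH] /=; first by rewrite m_gt1.
case/and4P => a_gt0 a_lt t_red t_head w_last; rewrite a_gt0 a_lt /=.
case: t IH t_red t_head w_last => [|[i' a'] t] IH t_red t_head w_last /=.
  by rewrite m_gt1 /= eq_sym w_last.
by have /= -> := IH t_red w_last.
Qed.

Variables (F : Grp) (x : 'I_k -> F).
Hypothesis presF : is_presentation x (cyclic_free_rel m).

Fixpoint eval_word (w : seq syllable) : F :=
  if w is (i, a) :: t then gpow (x i) a ** eval_word t else gone F.

Lemma eval_join i a t : eval_word (join_head i a t) = gpow (x i) a ** eval_word t.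
Proof. by rewrite /join_head; case: eqP => [->|]; rewrite ?gmul1l. Qed.

Lemma eval_mul_gen i w : reduced w -> eval_word (mul_gen i w) = x i ** eval_word w.
Proof.
move=> /(split_headP i) [_ _ _ w_eq].
rewrite -{2}w_eq /mul_gen !eval_join gpow_mod; last exact: presF.1.
by rewrite gpowS gmulA.
Qed.

Section Action.
Variable rho : F -> SymGrp RedWord.
Hypotheses (hrho : is_hom rho) (rho_x : forall i, rho (x i) = gen_perm i).

Local Notation act f := (bij_fun (rho f)).

Lemma act_mul a b w : act (a ** b) w = act a (act b w).
Proof. by rewrite hrho. Qed.

Lemma eval_act f (w : RedWord) :
  eval_word (proj1_sig (act f w)) = f ** eval_word (proj1_sig w).
Proof.
move: f w; apply: (pres_ind presF (@cyc_stable _ m) (@cyc_reflect _ m)).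
- by move=> w; rewrite hom1 // gmul1l.
- by move=> a b IHa IHb w; rewrite act_mul IHa IHb gmulA.
- move=> a IHa w.
  have actV : act (a^-1) w = (proj1_sig (rho a)).2 w by rewrite homV.
  have act_back : act a ((proj1_sig (rho a)).2 w) = w.
    by case: (rho a) => [[f f'] []] /= _ ->.
  rewrite actV; apply: (gmulIl (a := a)).
  by rewrite -IHa act_back gmulA gmulVr gmul1l.
- by move=> i w; rewrite rho_x /= eval_mul_gen // (proj2_sig w).
Qed.

Lemma act_eval_word (w v : seq syllable) (v_red : reduced v) :
  reduced (w ++ v) -> proj1_sig (act (eval_word w) (exist _ v v_red)) = w ++ v.
Proof.
elim: w => [|[i a] t IH] /=; first by rewrite hom1.
case/and4P => a_gt0 a_lt tv_red tv_head.
rewrite act_mul homX // bij_fun_gpow.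
set u := act (eval_word t) _.
have u_eq : proj1_sig u = t ++ v by exact: IH.
have -> : iter a (bij_fun (rho (x i))) u = iter a (mul_genR i) u by rewrite rho_x.
rewrite val_iter_mul_genR iter_mul_gen ?(proj2_sig u) // u_eq.
have -> : split_head i (t ++ v) = (0, t ++ v).
  by move: tv_head; case: (t ++ v) => [|[j b] s] //= /negPf ->.
by rewrite /= add0n modn_small // /join_head (negPf (lt0n_neq0 a_gt0)).
Qed.

(* A central element f is trivial: if its normal form w were nonempty, pick
   x_j not ending w; then f x_j has normal form w x_j while x_j f has normal
   form x_j w (simplified), and these differ. *)
Lemma central_trivial : 1 < k -> forall f, (forall y, f ** y = y ** f) -> f = gone F.
Proof.
move=> two_gens f f_central.
pose nil_word : RedWord := exist _ [::] isT.
pose w := proj1_sig (act f nil_word).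
have w_red : reduced w := proj2_sig (act f nil_word).
have f_eq : eval_word w = f by rewrite /w eval_act /= gmul1r.
case w_def : w => [|[i a] t]; first by rewrite -f_eq w_def.
have [j last_j] := ord_avoid (last (i, a) t).1 two_gens.
have j_red : reduced [:: (j, 1)] by rewrite /= m_gt1.
pose xj : RedWord := exist _ [:: (j, 1)] j_red.
have right_mul : proj1_sig (act f xj) = w ++ [:: (j, 1)].
  rewrite -{1}f_eq act_eval_word // cats1 reduced_rcons // w_def.
  by move: last_j; case: (t) => [|p s] //=; rewrite eq_sym.
have left_mul : proj1_sig (act f xj) = mul_gen j w.
  have -> : xj = act (x j) nil_word.
    by apply: val_inj; rewrite rho_x /= /mul_gen /= modn_small ?m_gt1.
  by rewrite -act_mul f_central act_mul rho_x.
move: right_mul; rewrite left_mul w_def /mul_gen /=.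
case: eqP => [_|/eqP ij] /=.
  by rewrite /join_head; case: eqP => _ /(congr1 size) /=; rewrite size_cat /=; lia.
by rewrite /join_head modn_small ?m_gt1 // => -[/eqP]; rewrite eq_sym (negPf ij).
Qed.
End Action.

Lemma free_product_centerless :
  1 < k -> forall f, (forall y, f ** y = y ** f) -> f = gone F.
Proof.
have [rho [hrho rho_x]] := (presF.2 (SymGrp RedWord) gen_perm gen_perm_rel).1.
exact: central_trivial hrho rho_x.
Qed.
End FreeProductCyclic.

Definition ZGrp (p : nat) : Grp.
refine (@MkGrp 'Z_(p.+2) (fun a b => (a + b)%R) 0%R (fun a => (- a)%R) _ _ _).
- by move=> a b c; rewrite GRing.addrA.
- by move=> a; rewrite GRing.add0r.
- by move=> a; rewrite GRing.addNr.
Defined.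

Lemma ZGrp_gpow p (y : ZGrp p) j : gpow y j = (y *+ j)%R.
Proof. by elim: j => // j IH; rewrite gpowS IH GRing.mulrS. Qed.

(* Let sigma be an endomorphism of F = *_i Z/m_i sending a generator
   x = a^-1 b of odd order m > 1 to a b^-1.  Then no inner automorphism undoes
   sigma: on the quotient Z/m of F killing the other generators, sigma maps
   the image of x to its opposite, inner automorphisms act trivially, and
   1 <> -1 in Z/m since m is odd. *)
Lemma not_inner_inverse k (m : 'I_k -> nat) (F : Grp) (x : 'I_k -> F) :
  is_presentation x (cyclic_free_rel m) -> forall k0, odd (m k0) -> 1 < m k0 ->
  forall (sigma : F -> F) (a b f : F), is_hom sigma ->
  a^-1 ** b = x k0 -> sigma (x k0) = a ** b^-1 ->
  ~ (forall y, f ** sigma y ** f^-1 = y).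
Proof.
move=> presF k0 m_odd m_gt1 sigma a b f hsigma x_eq sigma_x undo.
pose p := (m k0).-2.
have m_eq : m k0 = p.+2 by rewrite /p; case: (m k0) m_odd m_gt1 => [|[|q]].
pose h : 'I_k -> ZGrp p := fun j => if j == k0 then 1%R else 0%R.
have h_rel : cyclic_free_rel m h.
  move=> j; rewrite /h ZGrp_gpow; case: eqP => [->|_]; last by rewrite GRing.mul0rn.
  by apply: val_inj; rewrite /= val_Zp_nat // m_eq modnn.
have [chi [hchi chi_x]] := (presF.2 (ZGrp p) h h_rel).1.
have chi_x0 : chi (x k0) = 1%R by rewrite chi_x /h eqxx.
have chi_sigma_x : chi (f ** sigma (x k0) ** f^-1) = chi (x k0) by rewrite undo.
move: chi_sigma_x (congr1 chi x_eq); rewrite sigma_x !hchi !(homV hchi) chi_x0 /=.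
move=> e1 e2; have two_eq0 : (1 + 1 = 0 :> 'Z_(p.+2))%R by rewrite -{1}e1 -e2; ring.
move: two_eq0 => /(congr1 val) /=; rewrite /Zp_trunc /=.
have p_gt0 : 0 < p by move: m_odd; rewrite m_eq; case: (p).
by rewrite (modn_small (m:=1)) // modn_small //; lia.
Qed.

(* Given an edge labelling lab of a tree by elements of a group G,
   there is a potential zeta on the vertices with zeta(u)^-1 zeta(v) = lab(u,v)
   on every edge; it is built by adding the vertices one at a time through
   edges leaving the part already treated. *)
Section TreePotential.
Variables (n : nat) (M : 'I_n -> 'I_n -> option nat).
Hypothesis Msym : forall i j, M i j = M j i.

Lemma connect_ind (Q : 'I_n -> Prop) u v : connect (cox_adj M) u v -> Q u ->
  (forall a b, cox_adj M a b -> Q a -> Q b) -> Q v.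
Proof.
move=> /connectP [p p_path ->] Qu Q_adj.
elim: p u p_path Qu => [|z q IH] u //= /andP [uz z_path] Qu.
exact: IH z z_path (Q_adj _ _ uz Qu).
Qed.

Lemma crossing_edge (S : {set 'I_n}) u v :
  connect (cox_adj M) u v -> u \in S -> v \notin S ->
  exists a b, [/\ a \in S, b \notin S & cox_adj M a b].
Proof.
move=> /connectP [p p_path ->].
elim: p u p_path => [|z q IH] u /=; first by move=> _ uS /negP.
move=> /andP [uz z_path] uS q_out.
case zS : (z \in S); first exact: IH z z_path zS q_out.
by exists u, z; rewrite zS.
Qed.

Definition orient (u v : 'I_n) : 'I_n * 'I_n := if u < v then (u, v) else (v, u).

Lemma orient_edge u v : cox_adj M u v -> orient u v \in cox_edges M.
Proof.
rewrite /cox_adj /orient inE => /andP [uv M_uv]; case: (ltnP u v) => /= h.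
  by rewrite h.
rewrite Msym M_uv andbT ltn_neqAle h andbT.
by apply: contra uv => /eqP e; apply/eqP/val_inj; rewrite /= e.
Qed.

Variables (G : Grp) (lab : 'I_n * 'I_n -> G).

(* zeta is a potential for lab on the edge set C spanning the vertex set S,
   which is connected by C (|C| + 1 = |S|). *)
Definition partial_potential (S : {set 'I_n}) (C : {set 'I_n * 'I_n})
  (zeta : 'I_n -> G) : Prop :=
  [/\ #|C|.+1 = #|S|, C \subset cox_edges M,
      (forall p, p \in C -> p.1 \in S /\ p.2 \in S) &
      (forall p, p \in C -> (zeta p.1)^-1 ** zeta p.2 = lab p)].

(* Extend a partial potential through an edge (u, v) leaving S; zeta v is
   forced by the label of that edge. *)
Lemma potential_extend S C zeta : cox_connected M ->
  partial_potential S C zeta -> #|S| < n ->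
  exists S' C' zeta', partial_potential S' C' zeta' /\ #|S'| = #|S|.+1.
Proof.
move=> conn [C_card C_sub C_in zeta_C] S_small.
have [y yS] : exists y, y \notin S.
  apply/existsP; rewrite -negb_forall; apply: contraL S_small => /forallP S_full.
  by rewrite -leqNgt -{1}(card_ord n); apply/subset_leq_card/subsetP => y _.
have [x0 x0S] : exists x0, x0 \in S by apply/card_gt0P; rewrite -C_card.
have [u [v [uS vS uv]]] := crossing_edge (conn x0 y) x0S yS.
pose pe := orient u v.
have pe_C : pe \notin C.
  apply/negP => /C_in []; rewrite /pe /orient; case: (ltnP u v) => _ /= h1 h2.
    by rewrite h2 in vS.
  by rewrite h1 in vS.
have u_ne_v : u != v by apply: contraNneq vS => <-.
pose zeta' w := if w == v then
    (if u < v then zeta u ** lab pe else zeta u ** (lab pe)^-1) else zeta w.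
exists (v |: S), (pe |: C), zeta'; split; last by rewrite cardsU1 vS.
split.
- by rewrite !cardsU1 vS pe_C !add1n C_card.
- by rewrite subUset sub1set orient_edge // C_sub.
- move=> q; rewrite !inE => /orP [/eqP ->|/C_in [h1 h2]]; last first.
    by split; rewrite ?inE ?h1 ?h2 orbT.
  by rewrite /pe /orient; case: (ltnP u v) => _ /=; split; rewrite ?inE ?eqxx ?uS ?orbT.
- move=> q; rewrite !inE => /orP [/eqP ->|qC]; last first.
    have [h1 h2] := C_in q qC.
    have n1 : q.1 != v by apply: contraNneq vS => <-.
    have n2 : q.2 != v by apply: contraNneq vS => <-.
    by rewrite /zeta' (negPf n1) (negPf n2) zeta_C.
  rewrite /zeta' /pe /orient; case: (ltnP u v) => h /=.
    by rewrite eqxx (negPf u_ne_v) gmulKl.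
  by rewrite eqxx (negPf u_ne_v) ginvM ginvK -gmulA gmulVl gmul1r.
Qed.

Lemma tree_potential : 0 < n -> cox_tree M ->
  exists zeta : 'I_n -> G,
    forall p, p \in cox_edges M -> (zeta p.1)^-1 ** zeta p.2 = lab p.
Proof.
move=> n_gt0 [conn n_edges].
have grow j : j < n -> exists S C zeta,
    partial_potential S C zeta /\ #|S| = j.+1.
  elim: j => [_|j IH j_lt].
    exists [set Ordinal n_gt0], set0, (fun _ => gone G).
    split; last by rewrite cards1.
    by split; rewrite ?cards0 ?cards1 ?sub0set // => p; rewrite inE.
  have [S [C [zeta [pp cardS]]]] := IH (ltnW j_lt).
  have S_small : #|S| < n by rewrite cardS.
  have [S' [C' [zeta' [pp' cardS']]]] := potential_extend conn pp S_small.
  by exists S', C', zeta'; rewrite cardS' cardS.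
have n_pred_lt : n.-1 < n by rewrite ltn_predL.
have [S [C [zeta [[C_card C_sub _ zeta_C] cardS]]]] := grow n.-1 n_pred_lt.
exists zeta => p pE; apply: zeta_C.
suff /eqP -> : C == cox_edges M by [].
have C_card' : #|C| = n.-1 by apply: succn_inj; rewrite C_card cardS.
by rewrite eqEcard C_sub n_edges C_card' leqnn.
Qed.
End TreePotential.

Lemma injective_hom_to_Aut_of (W F : Grp) (phi : W -> AutGrp F) :
  is_hom phi -> injective phi -> injective_hom_to_Aut (fun w => bij_fun (phi w)).
Proof.
move=> hphi phi_inj; split; [|split].
- by move=> w; case: (phi w) => [[f f'] []] /= c1 c2 hf; split => //; exists f'.
- by move=> w1 w2 y; rewrite hphi.
- by move=> w1 w2 e; apply: phi_inj; apply: bij_ext.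
Qed.

Section TreeCoxeterEmbedding.
Variables (n : nat) (M : 'I_n -> 'I_n -> option nat) (W : Grp) (s : 'I_n -> W)
  (m : 'I_n.-1 -> nat) (e : 'I_n.-1 -> 'I_n * 'I_n) (F : Grp) (x : 'I_n.-1 -> F).
Hypotheses (n_ge3 : 3 <= n) (coxW : coxeter_system M s) (M_odd : odd_coxeter M)
  (M_tree : cox_tree M) (e_inj : injective e)
  (e_edge : forall k, e k \in cox_edges M)
  (e_exp : forall k, M (e k).1 (e k).2 = Some (m k))
  (presF : is_presentation x (cyclic_free_rel m)).

Let Msym : forall i j, M i j = M j i := coxW.1.2.1.
Let presW : is_presentation s (coxeter_rel M) := coxW.2.

Lemma edge_ends_neq k : (e k).1 != (e k).2.
Proof.
have := e_edge k; rewrite inE => /andP [lt _].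
by apply: contraTneq lt => ->; rewrite ltnn.
Qed.

Lemma exponent_gt1 k : 1 < m k.
Proof. exact: coxW.1.2.2 _ _ _ (edge_ends_neq k) (e_exp k). Qed.

Lemma exponent_odd k : odd (m k).
Proof. exact: M_odd (edge_ends_neq k) (e_exp k). Qed.

Lemma edge_enum p : p \in cox_edges M -> exists k, e k = p.
Proof.
move=> pE; have : [set e k | k in 'I_n.-1] == cox_edges M.
  rewrite eqEcard card_imset // card_ord M_tree.2 leqnn andbT.
  by apply/subsetP => q /imsetP [k _ ->].
by move/eqP => E; rewrite -E in pE; case/imsetP: pE => k _ ->; exists k.
Qed.

Lemma s_invol i : s i ** s i = gone W.
Proof. by have := presW.1 i i 1 (coxW.1.1 i); rewrite gpow1. Qed.

Lemma sV i : (s i)^-1 = s i.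
Proof. by symmetry; apply: ginv_uniq; exact: s_invol. Qed.

Lemma n_gt0 : 0 < n. Proof. exact: leq_trans n_ge3. Qed.

Definition root : 'I_n := Ordinal n_gt0.

Definition edge_gen (p : 'I_n * 'I_n) : F :=
  if [pick k | e k == p] is Some k then x k else gone F.

Lemma edge_gen_e k : edge_gen (e k) = x k.
Proof.
by rewrite /edge_gen; case: pickP => [k' /eqP /e_inj -> //|/(_ k)]; rewrite eqxx.
Qed.

Lemma rooted_potential : exists zeta : 'I_n -> F, zeta root = gone F /\
  forall k, (zeta (e k).1)^-1 ** zeta (e k).2 = x k.
Proof.
have [z z_edge] := tree_potential Msym edge_gen n_gt0 M_tree.
exists (fun v => (z root)^-1 ** z v); split; first by rewrite gmulVl.
by move=> k; rewrite ginvM ginvK -gmulA gmulVKl -edge_gen_e; exact: z_edge.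
Qed.

Section Construction.
Variable zeta : 'I_n -> F.
Hypotheses (zeta_root : zeta root = gone F)
  (zeta_e : forall k, (zeta (e k).1)^-1 ** zeta (e k).2 = x k).

Lemma edge_increment u v : cox_adj M u v -> exists k, M u v = Some (m k) /\
  ((e k = (u, v) /\ (zeta u)^-1 ** zeta v = x k) \/
   (e k = (v, u) /\ (zeta u)^-1 ** zeta v = (x k)^-1)).
Proof.
move=> uv; have [k ek] := edge_enum (orient_edge Msym uv).
exists k; move: ek; rewrite /orient; case: (ltnP u v) => _ ek.
  by split; [rewrite -(e_exp k) ek | left; split => //; rewrite -zeta_e ek].
split; first by rewrite Msym -(e_exp k) ek.
by right; split => //; rewrite -zeta_e ek /= ginvM ginvK.
Qed.

(* The images prescribed for the x_k in W and in F satisfy the relations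
   of F; the latter are conjugates of the inverses x_k^-1. *)
Lemma psi_rel : cyclic_free_rel m (fun k => s (e k).1 ** s (e k).2).
Proof. by move=> k; apply: presW.1; exact: e_exp. Qed.

Lemma sigma_rel : cyclic_free_rel m (fun k => zeta (e k).1 ** (zeta (e k).2)^-1).
Proof.
move=> k; have -> : zeta (e k).1 ** (zeta (e k).2)^-1 =
    zeta (e k).1 ** (x k)^-1 ** (zeta (e k).1)^-1.
  by rewrite -zeta_e ginvM ginvK !gmulA gmulKr.
by rewrite gpow_conj gpow_inv presF.1 ginv1 gmul1r gmulVr.
Qed.

Variable psi : F -> W.
Hypotheses (hpsi : is_hom psi) (psi_x : forall k, psi (x k) = s (e k).1 ** s (e k).2).

Variable sigma : F -> F.
Hypotheses (hsigma : is_hom sigma)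
  (sigma_x : forall k, sigma (x k) = zeta (e k).1 ** (zeta (e k).2)^-1).

Lemma psi_edge u v : cox_adj M u v -> psi ((zeta u)^-1 ** zeta v) = s u ** s v.
Proof.
case/edge_increment => k [_ [[ek ->]|[ek ->]]]; first by rewrite psi_x ek.
by rewrite (homV hpsi) psi_x ek /= ginvM !sV.
Qed.

Lemma sigma_edge u v : cox_adj M u v ->
  sigma ((zeta u)^-1 ** zeta v) = zeta u ** (zeta v)^-1.
Proof.
case/edge_increment => k [_ [[ek ->]|[ek ->]]]; first by rewrite sigma_x ek.
by rewrite (homV hsigma) sigma_x ek /= ginvM ginvK.
Qed.

Lemma psi_zeta v : psi (zeta v) = s root ** s v.
Proof.
apply: (connect_ind (Q := fun v => psi (zeta v) = s root ** s v) (M_tree.1 root v)).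
  by rewrite zeta_root (hom1 hpsi) s_invol.
move=> u w uw psi_u.
have -> : zeta w = zeta u ** ((zeta u)^-1 ** zeta w) by rewrite gmulVKl.
by rewrite hpsi psi_u psi_edge // -gmulA (gmulA (s u)) s_invol gmul1l.
Qed.

Lemma sigma_zeta v : sigma (zeta v) = (zeta v)^-1.
Proof.
apply: (connect_ind (Q := fun v => sigma (zeta v) = (zeta v)^-1) (M_tree.1 root v)).
  by rewrite zeta_root (hom1 hsigma) ginv1.
move=> u w uw sigma_u.
have -> : zeta w = zeta u ** ((zeta u)^-1 ** zeta w) by rewrite gmulVKl.
by rewrite hsigma sigma_u sigma_edge // gmulA gmulVl gmul1l gmulVKl.
Qed.

Lemma sigma_invol f : sigma (sigma f) = f.
Proof.
apply: (pres_uniq presF (@cyc_stable _ m) (f1 := sigma \o sigma) (f2 := id)) => //.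
  exact: hom_comp.
by move=> k /=; rewrite sigma_x hsigma (homV hsigma) !sigma_zeta ginvK zeta_e.
Qed.

Lemma psi_sigma f : psi (sigma f) = s root ** psi f ** s root.
Proof.
apply: (pres_uniq presF (@cyc_stable _ m) (f1 := psi \o sigma)
  (f2 := fun f => s root ** psi f ** s root)).
- exact: hom_comp.
- move=> a b; rewrite hpsi !gmulA; congr (_ ** _).
  by rewrite -(gmulA (s root ** psi a) (s root) (s root)) s_invol gmul1r.
- by move=> k /=; rewrite sigma_x hpsi (homV hpsi) !psi_zeta psi_x ginvM !sV !gmulA.
Qed.

(* W = psi(F) + psi(F) s_root, since s_v = psi (zeta(v)^-1) s_root. *)
Lemma W_decomp w : exists f, w = psi f \/ w = psi f ** s root.
Proof.
have swap g : s root ** psi g = psi (sigma g) ** s root.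
  by rewrite psi_sigma -gmulA s_invol gmul1r.
move: w; apply: (pres_ind presW (@cox_stable _ M) (@cox_reflect _ M)).
- by exists (gone F); left; rewrite (hom1 hpsi).
- move=> a b [f [->|->]] [g [->|->]].
  + by exists (f ** g); left; rewrite hpsi.
  + by exists (f ** g); right; rewrite hpsi gmulA.
  + by exists (f ** sigma g); right; rewrite hpsi -gmulA swap gmulA.
  + exists (f ** sigma g); left.
    by rewrite hpsi gmulA -(gmulA _ (s root)) swap gmulA -gmulA s_invol gmul1r.
- move=> a [f [->|->]]; first by exists f^-1; left; rewrite (homV hpsi).
  exists (sigma f^-1); right.
  by rewrite ginvM sV psi_sigma (homV hpsi) -gmulA s_invol gmul1r.
- move=> v; exists (zeta v)^-1; right.
  by rewrite (homV hpsi) psi_zeta ginvM !sV -gmulA s_invol gmul1r.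
Qed.

Definition sigmaA : AutGrp F.
by refine (exist _ (sigma, sigma) _); split => //=; exact: sigma_invol.
Defined.

Definition genA (v : 'I_n) : AutGrp F := conjA ((zeta v)^-1) ** sigmaA.

(* genA i * genA j is conjugation by zeta(i)^-1 zeta(j); hence the genA
   satisfy the Coxeter relations. *)
Lemma genA_mul i j : genA i ** genA j = conjA ((zeta i)^-1 ** zeta j).
Proof.
apply: bij_ext => y /=.
by rewrite !hsigma !(homV hsigma) sigma_zeta sigma_invol !ginvK !ginvM !ginvK !gmulA.
Qed.

Lemma phi_rel : coxeter_rel M genA.
Proof.
move=> i j mij M_ij; rewrite genA_mul -(homX (@conjA_hom F)).
suff -> : gpow ((zeta i)^-1 ** zeta j) mij = gone F by rewrite (hom1 (@conjA_hom F)).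
case: (eqVneq i j) => [<-|i_ne_j]; first by rewrite gmulVl gpow1n.
have ij : cox_adj M i j by rewrite /cox_adj i_ne_j M_ij.
have [k [M_k [[_ ->]|[_ ->]]]] := edge_increment ij; rewrite M_k in M_ij.
  by case: M_ij => <-; exact: presF.1.
by case: M_ij => <-; rewrite gpow_inv presF.1 ginv1.
Qed.

Variable phi : W -> AutGrp F.
Hypotheses (hphi : is_hom phi) (phi_s : forall v, phi (s v) = genA v).

Lemma phi_psi f : phi (psi f) = conjA f.
Proof.
apply: (pres_uniq presF (@cyc_stable _ m) (f1 := phi \o psi) (f2 := @conjA F)).
- exact: hom_comp.
- exact: conjA_hom.
- by move=> k /=; rewrite psi_x hphi !phi_s genA_mul zeta_e.
Qed.

Lemma phi_root : phi (s root) = sigmaA.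
Proof. by rewrite phi_s /genA zeta_root ginv1 (hom1 (@conjA_hom F)) gmul1l. Qed.

(* The kernel of phi is trivial: psi f lies in it only for central, hence
   trivial, f; and psi f * s_root never does, sigma not being inner. *)
Lemma phi_ker w : phi w = gone _ -> w = gone W.
Proof.
have two_edges : 1 < n.-1 by move: n_ge3; case: (n) => [|[|[|q]]].
have [f [->|->]] := W_decomp w.
  rewrite phi_psi => conj1.
  have f_central y : f ** y = y ** f.
    by have /= e1 := congr1 (fun p => bij_fun p y) conj1; rewrite -{2}e1 gmulVKr.
  have f1 := free_product_centerless exponent_gt1 presF two_edges f_central.
  by rewrite f1 (hom1 hpsi).
rewrite hphi phi_psi phi_root => twist1; exfalso.
pose k0 : 'I_n.-1 := Ordinal (ltnW two_edges).
apply: (not_inner_inverse presF (exponent_odd k0) (exponent_gt1 k0) hsigma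
  (zeta_e k0) (sigma_x k0) (f := f)) => y.
by have /= := congr1 (fun p => bij_fun p y) twist1.
Qed.
End Construction.

Lemma tree_coxeter_embedding : exists phi : W -> F -> F, injective_hom_to_Aut phi.
Proof.
have [zeta [zeta_root zeta_e]] := rooted_potential.
have [psi [hpsi psi_x]] := (presF.2 W _ psi_rel).1.
have [sigma [hsigma sigma_x]] := (presF.2 F _ (sigma_rel zeta_e)).1.
have genA_rel := phi_rel zeta_root zeta_e hsigma sigma_x.
have [phi [hphi phi_s]] := (presW.2 (AutGrp F) _ genA_rel).1.
have phi_inj : injective phi := hom_inj_of_ker hphi (phi_ker hpsi psi_x hphi phi_s).
by exists (fun w => bij_fun (phi w)); exact: injective_hom_to_Aut_of.
Qed.
End TreeCoxeterEmbedding.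

Theorem corollary2p10 (n : nat) (M : 'I_n -> 'I_n -> option nat)
  (W : Grp) (s : 'I_n -> W)
  (m : 'I_n.-1 -> nat) (e : 'I_n.-1 -> 'I_n * 'I_n)
  (F : Grp) (x : 'I_n.-1 -> F) :
  (3 <= n)%N ->
  coxeter_system M s ->
  odd_coxeter M ->
  cox_tree M ->
  (* e enumerates the edges of the tree, m k being the exponent on edge e k *)
  injective e ->
  (forall k, e k \in cox_edges M) ->
  (forall k, M (e k).1 (e k).2 = Some (m k)) ->
  (* F = (Z/m_1) * ... * (Z/m_(n-1)) *)
  is_presentation x (cyclic_free_rel m) ->
  exists phi : W -> F -> F, injective_hom_to_Aut phi.
Proof. exact: tree_coxeter_embedding. Qed.
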